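(* Let $\mathfrak g=\mathfrak g_{-1}\oplus\mathfrak g_0\oplus\mathfrak g_1$ be a complex Lie superalgebra with $\dim\mathfrak g_{\bar1}<\infty$ and compatible $\mathbb Z$-grading, and let $M$ be a simple $\mathfrak g$-supermodule. Then there is a simple $\mathfrak g_0$-supermodule $N$ such that $M$ embeds into $\mathrm{Coind}_{\mathfrak g_{\geq0}}^{\mathfrak g}(N)$.
   Context: Compatible grading: $\mathfrak g_0=\mathfrak g_{\bar0}$, $\mathfrak g_{\bar1}=\mathfrak g_{-1}\oplus\mathfrak g_1$, $\mathfrak g_{\pm1}$ $\mathfrak g_0$-submodules, $[\mathfrak g_{\pm1},\mathfrak g_{\pm1}]=0$; $\mathfrak g_{\geq0}=\mathfrak g_0\oplus\mathfrak g_1$. Homomorphisms are even. $\mathrm{Coind}_{\mathfrak g_{\geq0}}^{\mathfrak g}(N)=\{f\in\mathrm{Hom}_{\mathbb C}(U(\mathfrak g),N)\mid f(pu)=pf(u)\ \forall p\in U(\mathfrak g_{\geq0})\}$ with $(xf)(u)=f(ux)$, where $\mathfrak g_1$ acts on $N$ by zero. *)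

From HB Require Import structures.
From mathcomp Require Import all_boot all_order all_algebra.
From mathcomp Require Import reals complex.
Set Implicit Arguments. Unset Strict Implicit. Unset Printing Implicit Defensive.
Import Order.TTheory GRing.Theory Num.Theory.
Local Open Scope ring_scope.

(* The complex numbers: C = R[i] for a real field R (any realType is iso to the reals). *)
Definition Cplx (R : realType) : fieldType := R[i].

Section Super.
Variable K : fieldType.

(* parity: false = even, true = odd; sign (-1)^(a b) *)
Definition ssign (a b : bool) : K := if a && b then -1 else 1.

(* A super vector space structure on W is given by its (linear) projection pe onto
   the even part, along the odd part. *)
Definition super_space (W : lmodType K) (pe : W -> W) : Prop :=
  linear pe /\ forall w, pe (pe w) = pe w.

Definition homog (W : lmodType K) (pe : W -> W) (b : bool) (w : W) : Prop :=
  if b then pe w = 0 else pe w = w.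

Definition bilinear_map (V W U : lmodType K) (f : V -> W -> U) : Prop :=
  (forall x, linear (f x)) /\ (forall y, linear (fun x => f x y)).

Definition lie_superalgebra (V : lmodType K) (pe : V -> V) (br : V -> V -> V) : Prop :=
  [/\ super_space pe, bilinear_map br,
    (forall a b x y, homog pe a x -> homog pe b y -> homog pe (a (+) b) (br x y)),
    (forall a b x y, homog pe a x -> homog pe b y -> br x y = - (ssign a b *: br y x)) &
    (forall a b c x y z, homog pe a x -> homog pe b y -> homog pe c z ->
       br x (br y z) = br (br x y) z + ssign a b *: br y (br x z))].

(* Compatible Z-grading g = g_{-1} + g_0 + g_1 given by projections Pm, P0, Pp:
   g_0 = g_{0bar}, g_{1bar} = g_{-1} + g_1, g_{+-1} are g_0-submodules,
   [g_{+-1}, g_{+-1}] = 0. *)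
Definition compatible_grading (V : lmodType K) (pe : V -> V) (br : V -> V -> V)
    (Pm P0 Pp : V -> V) : Prop :=
  [/\ (linear Pm /\ linear P0 /\ linear Pp),
    (forall x, Pm x + P0 x + Pp x = x),
    (forall x, Pm (Pm x) = Pm x /\ P0 (P0 x) = P0 x /\ Pp (Pp x) = Pp x),
    (forall x, Pm (P0 x) = 0 /\ Pm (Pp x) = 0 /\ P0 (Pm x) = 0 /\
               P0 (Pp x) = 0 /\ Pp (Pm x) = 0 /\ Pp (P0 x) = 0) &
    (forall x, P0 x = pe x) /\
    [/\ (forall x y, P0 x = x -> Pm y = y -> Pm (br x y) = br x y),
        (forall x y, P0 x = x -> Pp y = y -> Pp (br x y) = br x y),
        (forall x y, Pm x = x -> Pm y = y -> br x y = 0) &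
        (forall x y, Pp x = x -> Pp y = y -> br x y = 0)]].

Definition odd_part_findim (V : lmodType K) (pe : V -> V) : Prop :=
  exists (n : nat) (e : 'I_n -> V),
    forall x, homog pe true x -> exists c : 'I_n -> K, x = \sum_(i < n) c i *: e i.

(* A supermodule (W, qe, rho) over the Lie superalgebra (V, pe, br), where the
   action is only required for x with okx x (okx = setT for g, okx = g_0 for g_0). *)
Definition supermodule (V : lmodType K) (pe : V -> V) (br : V -> V -> V)
    (okx : V -> Prop) (W : lmodType K) (qe : W -> W) (rho : V -> W -> W) : Prop :=
  [/\ super_space qe,
    (forall x, okx x -> linear (rho x)),
    (forall c x y w, okx x -> okx y -> rho (c *: x + y) w = c *: rho x w + rho y w),
    (forall a b x w, okx x -> homog pe a x -> homog qe b w -> homog qe (a (+) b) (rho x w)) &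
    (forall a b x y w, okx x -> okx y -> homog pe a x -> homog pe b y ->
       rho (br x y) w = rho x (rho y w) - ssign a b *: rho y (rho x w))].

Definition sub_supermodule (V W : lmodType K) (qe : W -> W) (rho : V -> W -> W)
    (okx : V -> Prop) (S : W -> Prop) : Prop :=
  [/\ S 0, (forall c u w, S u -> S w -> S (c *: u + w)),
    (forall w, S w -> S (qe w)) &
    (forall x w, okx x -> S w -> S (rho x w))].

Definition simple_supermodule (V : lmodType K) (pe : V -> V) (br : V -> V -> V)
    (okx : V -> Prop) (W : lmodType K) (qe : W -> W) (rho : V -> W -> W) : Prop :=
  [/\ supermodule pe br okx qe rho, (exists w : W, w != 0) &
    (forall S : W -> Prop, sub_supermodule qe rho okx S ->
       (forall w, S w -> w = 0) \/ (forall w, S w))].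

(* A linear map U(g) -> N is the same thing as a linear map T(g) -> N
   vanishing on the two-sided ideal generated by x(x)y - (-1)^{|x||y|} y(x)x - [x,y]
   (x, y homogeneous); a linear map T(g) -> N is the same as a function
   f : seq V -> N (a word x1...xk stands for x1 (x) ... (x) xk) which is linear in
   each letter.  f lies in Coind_{g>=0}^g(N) iff moreover f(p u) = p f(u) for p in
   U(g>=0); as U(g>=0) is generated by g_0 and g_1, with g_1 acting on N by 0,
   it suffices to ask this for p in g_0 and p in g_1. *)
Definition in_Coind (V : lmodType K) (pe : V -> V) (br : V -> V -> V)
    (P0 Pp : V -> V) (N : lmodType K) (rhoN : V -> N -> N) (f : seq V -> N) : Prop :=
  [/\ (forall (a b : seq V) (c : K) (x y : V),
         f (a ++ (c *: x + y) :: b) = c *: f (a ++ x :: b) + f (a ++ y :: b)),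
    (forall (a b : seq V) (p q : bool) (x y : V), homog pe p x -> homog pe q y ->
         f (a ++ x :: y :: b) = ssign p q *: f (a ++ y :: x :: b) + f (a ++ br x y :: b)),
    (forall x w, P0 x = x -> f (x :: w) = rhoN x (f w)) &
    (forall x w, Pp x = x -> f (x :: w) = 0)].

Definition coind_act (V N : lmodType K) (x : V) (f : seq V -> N) : seq V -> N :=
  fun w => f (rcons w x).

(* Evenness: phi maps
   homogeneous m of parity a to an f with f(x1...xk) of parity a + |x1| + ... + |xk|
   for homogeneous letters xi, i.e. f is homogeneous of parity a in Hom_C(U(g), N). *)
Definition embeds_into_Coind (V : lmodType K) (pe : V -> V) (br : V -> V -> V)
    (P0 Pp : V -> V) (M : lmodType K) (qM : M -> M) (rhoM : V -> M -> M)
    (N : lmodType K) (qN : N -> N) (rhoN : V -> N -> N) : Prop :=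
  exists phi : M -> (seq V -> N),
    [/\ (forall c m m' w, phi (c *: m + m') w = c *: phi m w + phi m' w),
      (forall m, in_Coind pe br P0 Pp rhoN (phi m)),
      (forall m m', (forall w, phi m w = phi m' w) -> m = m'),
      (forall x m w, phi (rhoM x m) w = coind_act x (phi m) w) &
      (forall (a : bool) (m : M) (w : seq (bool * V)),
         homog qM a m -> (forall l, l \in w -> homog pe l.1 l.2) ->
         homog qN (foldl addb a (map fst w)) (phi m (map snd w)))].

End Super.

From HB Require Import structures.
From mathcomp Require Import all_boot all_order all_algebra.
From mathcomp Require Import reals complex.
From mathcomp Require Import generic_quotient ring_quotient boolp classical_sets.
Set Implicit Arguments. Unset Strict Implicit. Unset Printing Implicit Defensive.
Import GRing.Theory.
Local Open Scope ring_scope.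
Local Open Scope classical_set_scope.
Local Open Scope quotient_scope.

(* An even g-map M -> Coind N is the same as a g_0-map M -> N killing g_1 M: it
   sends m to u |-> p (u m).  So it suffices to find a simple graded g_0-quotient
   N = M / K of M / g_1 M; the induced map is nonzero, hence injective as M is
   simple.  Such a K exists by Zorn's lemma.  First, g_1 M is proper: g_1 acts
   through finitely many anticommuting square-zero operators, so g_1 M = M would
   force M = 0.  Second, since U(g) = U(g_1) U(g_0) Lambda(g_{-1}), M is generated
   over g_0, modulo g_1 M, by the finitely many vectors y_1 ... y_k m_0 (y_i from
   a finite spanning set of g_{-1}, m_0 homogeneous and nonzero), so the union of
   a chain of proper such submodules is proper. *)

Lemma foldl_addb a b s : foldl addb (a (+) b) s = foldl addb a s (+) b.
Proof. by elim: s a => [|x s IH] a //=; rewrite -IH addbAC. Qed.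

Section LinearMaps.
Variables (K : fieldType) (W W' : lmodType K) (f : W -> W').
Hypothesis f_lin : linear f.

Lemma lin0 : f 0 = 0.
Proof.
have := f_lin 1 0 0; rewrite !scale1r !addr0 => f00.
by apply: (@addrI _ (f 0)); rewrite addr0 -f00.
Qed.

Lemma linD u v : f (u + v) = f u + f v.
Proof. by rewrite -{1}[u]scale1r f_lin scale1r. Qed.

Lemma linZ c u : f (c *: u) = c *: f u.
Proof. by rewrite -[c *: u]addr0 f_lin lin0 addr0. Qed.

Lemma linN u : f (- u) = - f u.
Proof. by rewrite -scaleN1r linZ scaleN1r. Qed.

Lemma linB u v : f (u - v) = f u - f v.
Proof. by rewrite linD linN. Qed.

Lemma lin_sum (I : Type) (r : seq I) (c : I -> K) (v : I -> W) :
  f (\sum_(i <- r) c i *: v i) = \sum_(i <- r) c i *: f (v i).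
Proof. by rewrite (big_morph f linD lin0); apply: eq_bigr => i _; rewrite linZ. Qed.

End LinearMaps.

Definition subspace (K : fieldType) (W : lmodType K) (S : set W) :=
  S 0 /\ forall c u v, S u -> S v -> S (c *: u + v).

Definition lspan (K : fieldType) (W : lmodType K) (G : set W) : set W :=
  fun v => forall S, subspace S -> G `<=` S -> S v.

Section Span.
Variables (K : fieldType) (W : lmodType K).
Implicit Types (S G : set W).

Lemma subspaceD S u v : subspace S -> S u -> S v -> S (u + v).
Proof. by case=> _ Slin Su Sv; rewrite -[u]scale1r; apply: Slin. Qed.

Lemma subspaceZ S c u : subspace S -> S u -> S (c *: u).
Proof. by case=> S0 Slin Su; rewrite -[_ *: u]addr0; apply: Slin. Qed.

Lemma subspaceN S u : subspace S -> S u -> S (- u).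
Proof. by move=> HS Su; rewrite -scaleN1r; apply: subspaceZ. Qed.

Lemma subspaceB S u v : subspace S -> S u -> S v -> S (u - v).
Proof. by move=> HS Su Sv; apply: subspaceD => //; apply: subspaceN. Qed.

Lemma subspace_sum S (I : Type) (r : seq I) (c : I -> K) (v : I -> W) :
  subspace S -> (forall i, S (v i)) -> S (\sum_(i <- r) c i *: v i).
Proof.
move=> HS Sv; apply: (big_ind S); first by case: HS.
  by move=> ? ?; apply: subspaceD.
by move=> i _; apply: subspaceZ.
Qed.

Lemma subspace_preimage (W' : lmodType K) (f : W -> W') (S' : set W') :
  linear f -> subspace S' -> subspace (f @^-1` S').
Proof.
move=> f_lin [S0 Slin]; split; first by rewrite /preimage /= lin0.
by move=> c u v Su Sv; rewrite /preimage /= f_lin; apply: Slin.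
Qed.

Lemma lspan_subspace G : subspace (lspan G).
Proof.
split=> [S [S0 _] _ //|c u v Su Sv S HS GS].
by case: (HS) => _; apply; [apply: Su | apply: Sv].
Qed.

Lemma sub_lspan G : G `<=` lspan G.
Proof. by move=> g Gg S _; apply. Qed.

Lemma lspan_min G S : subspace S -> G `<=` S -> lspan G `<=` S.
Proof. by move=> HS GS v; apply. Qed.

End Span.

Lemma lspan_linear (K : fieldType) (W W' : lmodType K) (f : W -> W')
    (G : set W) (G' : set W') : linear f ->
  (forall g, G g -> lspan G' (f g)) -> forall v, lspan G v -> lspan G' (f v).
Proof.
move=> f_lin fG; apply: (@lspan_min _ _ G (f @^-1` lspan G')) => //.
exact: subspace_preimage (lspan_subspace G').
Qed.

Section AnticommutingOperators.
Variables (K : fieldType) (W : lmodType K) (I : eqType) (A : I -> W -> W).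
Hypothesis A_lin : forall i, linear (A i).
Hypothesis A_anticomm : forall i j v, A i (A j v) = - A j (A i v).
Hypothesis A_sq0 : forall i v, A i (A i v) = 0.

Definition op_images (s : seq I) (S : set W) : set W :=
  [set v | exists2 i, i \in s & exists2 u, S u & v = A i u].

Lemma anticomm_lspan_eq0 s S :
  subspace S -> S `<=` lspan (op_images s S) -> S `<=` [set 0].
Proof.
elim: s S => [|j s IH] S HS SA.
  move=> v /SA; apply: lspan_min => [|g [//]].
  by split=> // c _ _ -> ->; rewrite scaler0 addr0.
have AjS0 u : S u -> A j u = 0.
  move=> Su; apply: (IH (A j @` S)); last by exists u.
  - split; first by exists 0; [case: HS | rewrite lin0].
    move=> c _ _ [u1 Su1 <-] [u2 Su2 <-].
    by exists (c *: u1 + u2); [case: HS => _; apply | rewrite A_lin].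
  - move=> _ [u1 Su1 <-]; apply: lspan_linear (SA _ Su1) => //.
    move=> g [k]; rewrite inE => /orP[/eqP-> | sk] [u2 Su2 ->].
      by rewrite A_sq0; case: (lspan_subspace (op_images s (A j @` S))).
    rewrite A_anticomm; apply: (subspaceN (lspan_subspace _)).
    by apply: sub_lspan; exists k => //; exists (A j u2) => //; exists u2.
apply: IH => // v /SA; apply: lspan_min; first exact: lspan_subspace.
move=> g [k]; rewrite inE => /orP[/eqP-> | sk] [u Su ->].
  by rewrite AjS0 //; case: (lspan_subspace (op_images s S)).
by apply: sub_lspan; exists k => //; exists u.
Qed.

(* Increasing words suffice: the A_i anticommute and square to zero. *)
Fixpoint wedge_orbit (s : seq I) (m : W) : seq W :=
  if s is i :: s' then wedge_orbit s' m ++ map (A i) (wedge_orbit s' m) else [:: m].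

Lemma mem_wedge_orbit s m : m \in wedge_orbit s m.
Proof. by elim: s => [|i s IH] /=; rewrite ?mem_head // mem_cat IH. Qed.

Lemma wedge_orbit_stable s m i v : i \in s ->
  lspan [set` wedge_orbit s m] v -> lspan [set` wedge_orbit s m] (A i v).
Proof.
move=> si; apply: lspan_linear => // l; elim: s si l => // j s IH si l.
pose Ws := [set` wedge_orbit s m].
pose Wjs := [set` wedge_orbit (j :: s) m].
have Ws_Wjs : lspan Ws `<=` lspan Wjs.
  apply: lspan_min; first exact: lspan_subspace.
  by move=> l' sl'; apply: sub_lspan; rewrite /Wjs /= mem_cat sl'.
have AjWs l' : lspan Ws l' -> lspan Wjs (A j l').
  apply: lspan_linear => // l'' sl''; apply: sub_lspan.
  by rewrite /Wjs /= mem_cat map_f ?orbT.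
move=> /=; rewrite -/Wjs mem_cat => /orP[sl | /mapP[l' sl' ->]].
  have [-> | ij] := eqVneq i j; first by apply: AjWs; apply: sub_lspan.
  by apply: Ws_Wjs; apply: IH; move: si; rewrite inE (negbTE ij).
have [-> | ij] := eqVneq i j; first by rewrite A_sq0; case: (lspan_subspace Wjs).
rewrite A_anticomm; apply: (subspaceN (lspan_subspace _)); apply: AjWs.
by apply: IH => //; move: si; rewrite inE (negbTE ij).
Qed.

End AnticommutingOperators.

Lemma bigcup_chain_seq (T : eqType) (F : set (set T)) (L : seq T) :
  F !=set0 -> total_on F subset -> [set` L] `<=` \bigcup_(X in F) X ->
  exists2 X, F X & [set` L] `<=` X.
Proof.
move=> [X0 FX0] Ftot; elim: L => [|l L IH] LF; first by exists X0.
have [|X FX LX] := IH; first by move=> l' Ll'; apply: LF; rewrite /= inE Ll' orbT.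
have [Y FY Yl] := LF l (mem_head l L).
have [XY | YX] := Ftot X Y FX FY.
  by exists Y => // l'; rewrite /= inE => /orP[/eqP-> // | Ll']; apply/XY/LX.
by exists X => // l'; rewrite /= inE => /orP[/eqP-> | Ll']; [apply: YX | apply: LX].
Qed.

Lemma Zorn_bigcup_above (T : Type) (P : set (set T)) (S0 : set T) : P S0 ->
  (forall F, F `<=` P -> F !=set0 -> total_on F subset -> P (\bigcup_(X in F) X)) ->
  exists2 K, S0 `<=` K & P K /\ forall S, P S -> K `<=` S -> S = K.
Proof.
move=> PS0 Pchain.
have [A [PA Amax]] : exists A, P (A `|` S0) /\ forall B, A `<` B -> ~ P (B `|` S0).
  apply: (Zorn_bigcup (P := fun A => P (A `|` S0))) => F FP Ftot.
  have [-> | F0] := eqVneq F set0; first by rewrite bigcup_set0 set0U.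
  rewrite -bigcupUl; last exact: (set0P F).1 F0.
  rewrite -(bigcup_image F (fun X => X `|` S0) id); apply: Pchain.
  - by move=> _ [X FX <-]; apply: FP.
  - by have [X FX] := (set0P F).1 F0; exists (X `|` S0); exists X.
  - move=> _ _ [X FX <-] [Y FY <-].
    by have [XY | YX] := Ftot X Y FX FY; [left | right]; apply: setSU.
exists (A `|` S0); first exact: subsetUr.
split=> // S PS AS; apply/seteqP; split=> //.
have [SA | SA] := pselect (S `<=` A); first by move=> x /SA; left.
exfalso; apply: (Amax S); first by split=> // x Ax; apply: AS; left.
by rewrite setUidl // => x S0x; apply: AS; right.
Qed.

Section QuotientModule.
Variables (F : fieldType) (M : lmodType F) (S : set M).

(* The proof argument lets the canonical submodClosed instance below be found
   by unification. *)
Definition subspace_pred of subspace S : {pred M} := fun m => `[< S m >].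

Hypothesis S_sub : subspace S.
Local Notation SP := (subspace_pred S_sub).

Lemma subspace_pred_closed : subsemimod_closed SP.
Proof.
split; [split|].
- by apply/asboolP; case: S_sub.
- by move=> u v /asboolP Su /asboolP Sv; apply/asboolP; apply: subspaceD.
- by move=> a v /asboolP Sv; apply/asboolP; apply: subspaceZ.
Qed.

HB.instance Definition _ := GRing.isSubmodClosed.Build F M SP subspace_pred_closed.

Local Notation Q := (Quotient.quot SP).

Lemma pi_subspaceP m m' : \pi_Q m = \pi m' <-> S (m - m').
Proof.
by split=> [/eqP | /asboolP Smm']; [rewrite piE => /asboolP | apply/eqP; rewrite piE].
Qed.

Definition scaleq (c : F) := lift_op1 Q ( *:%R c).

Lemma pi_scale c : {morph \pi_Q : m / c *: m >-> scaleq c m}.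
Proof.
move=> m; unlock scaleq; apply/pi_subspaceP; rewrite -scalerBr; apply: subspaceZ => //.
by apply/pi_subspaceP; rewrite reprK.
Qed.

Lemma scaleqA a b x : scaleq a (scaleq b x) = scaleq (a * b) x.
Proof. by elim/quotW: x => m; rewrite -!pi_scale scalerA. Qed.

Lemma scaleq1 : left_id 1 scaleq.
Proof. by elim/quotW => m; rewrite -pi_scale scale1r. Qed.

Lemma scaleqDr : right_distributive scaleq +%R.
Proof.
by move=> c; elim/quotW => m; elim/quotW => m'; rewrite -raddfD -!pi_scale scalerDr raddfD.
Qed.

Lemma scaleqDl x : {morph scaleq^~ x : a b / a + b}.
Proof. by move=> a b; elim/quotW: x => m; rewrite -!pi_scale scalerDl raddfD. Qed.

HB.instance Definition _ :=
  GRing.Zmodule_isLmodule.Build F Q scaleqA scaleq1 scaleqDr scaleqDl.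

Definition qproj (m : M) : Q := \pi_Q m.

Lemma qproj_linear : linear qproj.
Proof. by move=> c m m'; rewrite /qproj raddfD; congr (_ + _); exact: pi_scale. Qed.

Lemma qproj_eqP m m' : qproj m = qproj m' <-> S (m - m').
Proof. exact: pi_subspaceP. Qed.

Lemma qproj_eq0 m : qproj m = 0 <-> S m.
Proof. by rewrite -(lin0 qproj_linear) qproj_eqP subr0. Qed.

Lemma qproj_ind (P : Q -> Prop) : (forall m, P (qproj m)) -> forall q, P q.
Proof. by move=> Pm q; rewrite -[q]reprK; apply: Pm. Qed.

Lemma qproj_repr_map (f : M -> M) m : linear f -> f @` S `<=` S ->
  qproj (f (repr (qproj m))) = qproj (f m).
Proof.
move=> f_lin fS; apply/qproj_eqP; rewrite -linB //; apply: fS.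
by exists (repr (qproj m) - m) => //; apply/pi_subspaceP; rewrite reprK.
Qed.

End QuotientModule.

Section CoinducedEmbedding.
Variables (F : fieldType) (V : lmodType F) (pe : V -> V) (br : V -> V -> V).
Variables (Pm P0 Pp : V -> V).
Hypothesis Hlie : lie_superalgebra pe br.
Hypothesis Hgr : compatible_grading pe br Pm P0 Pp.
Variables (n : nat) (e : 'I_n -> V).
Hypothesis e_span_odd :
  forall x, homog pe true x -> exists c : 'I_n -> F, x = \sum_(i < n) c i *: e i.
Variables (M : lmodType F) (qM : M -> M) (rho : V -> M -> M).
Hypothesis HM : simple_supermodule pe br (fun _ => True) qM rho.
Hypothesis two_neq0 : (2%:R : F) != 0.

Definition gm x := Pm x = x.
Definition g0 x := P0 x = x.
Definition gp x := Pp x = x.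

Lemma pe_linear : linear pe. Proof. by case: Hlie => -[]. Qed.
Lemma pe_idem x : pe (pe x) = pe x. Proof. by case: Hlie => -[]. Qed.
Lemma br_homog a b x y :
  homog pe a x -> homog pe b y -> homog pe (a (+) b) (br x y).
Proof. by case: Hlie => _ _ brH _ _; apply: brH. Qed.

Lemma homog_even_part x : homog pe false (pe x).
Proof. by rewrite /homog pe_idem. Qed.
Lemma homog_odd_part x : homog pe true (x - pe x).
Proof. by rewrite /homog (linB pe_linear) pe_idem subrr. Qed.

Lemma P0E x : P0 x = pe x. Proof. by case: Hgr => _ _ _ _ [->]. Qed.
Lemma P0_linear : linear P0. Proof. by case: Hgr => -[_ []]. Qed.
Lemma Pm_linear : linear Pm. Proof. by case: Hgr => -[]. Qed.
Lemma Pp_linear : linear Pp. Proof. by case: Hgr => -[_ []]. Qed.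
Lemma Psum x : Pm x + P0 x + Pp x = x. Proof. by case: Hgr => _ ->. Qed.

Lemma gm_Pm x : gm (Pm x). Proof. by case: Hgr => _ _ /(_ x)[]. Qed.
Lemma g0_P0 x : g0 (P0 x). Proof. by case: Hgr => _ _ /(_ x)[_ []]. Qed.
Lemma gp_Pp x : gp (Pp x). Proof. by case: Hgr => _ _ /(_ x)[_ []]. Qed.

Lemma gm_odd x : gm x -> pe x = 0.
Proof. by move=> <-; rewrite -P0E; case: Hgr => _ _ _ /(_ x)[_ [_ []]]. Qed.
Lemma gp_odd x : gp x -> pe x = 0.
Proof. by move=> <-; rewrite -P0E; case: Hgr => _ _ _ /(_ x)[_ [_ [_ []]]]. Qed.
Lemma g0_even x : g0 x -> pe x = x.
Proof. by rewrite -P0E. Qed.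

Lemma br_g0_gm x y : g0 x -> gm y -> gm (br x y).
Proof. by case: Hgr => _ _ _ _ [_ [H _ _ _]]; apply: H. Qed.
Lemma br_g0_gp x y : g0 x -> gp y -> gp (br x y).
Proof. by case: Hgr => _ _ _ _ [_ [_ H _ _]]; apply: H. Qed.
Lemma br_gm x y : gm x -> gm y -> br x y = 0.
Proof. by case: Hgr => _ _ _ _ [_ [_ _ H _]]; apply: H. Qed.
Lemma br_gp x y : gp x -> gp y -> br x y = 0.
Proof. by case: Hgr => _ _ _ _ [_ [_ _ _ H]]; apply: H. Qed.

Lemma br_g0_g0 x y : g0 x -> g0 y -> g0 (br x y).
Proof.
by move=> /g0_even x0 /g0_even y0; rewrite /g0 P0E; apply: (@br_homog false false).
Qed.
Lemma br_gm_gp x y : gm x -> gp y -> g0 (br x y).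
Proof.
by move=> /gm_odd x1 /gp_odd y1; rewrite /g0 P0E; apply: (@br_homog true true).
Qed.

Lemma qM_linear : linear qM. Proof. by case: HM => -[[]]. Qed.
Lemma qM_idem m : qM (qM m) = qM m. Proof. by case: HM => -[[]]. Qed.
Lemma rho_linear x : linear (rho x). Proof. by case: HM => -[_ /(_ x I)]. Qed.
Lemma rho_linearl m : linear (rho^~ m).
Proof. by case: HM => -[_ _ rhoD _ _] _ _ c x y; apply: rhoD. Qed.
Lemma rho_homog a b x m :
  homog pe a x -> homog qM b m -> homog qM (a (+) b) (rho x m).
Proof. by case: HM => -[_ _ _ /(_ a b x m I)]. Qed.
Lemma rho_br a b x y m : homog pe a x -> homog pe b y ->
  rho (br x y) m = rho x (rho y m) - ssign F a b *: rho y (rho x m).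
Proof. by case: HM => -[_ _ _ _ /(_ a b x y m I I)]. Qed.
Lemma M_nontrivial : exists m : M, m != 0. Proof. by case: HM. Qed.
Lemma M_simple S : sub_supermodule qM rho (fun _ => True) S ->
  (forall m, S m -> m = 0) \/ (forall m, S m).
Proof. by case: HM => _ _; apply. Qed.

Lemma rho_comm_g0 x y m : g0 x -> pe y = 0 ->
  rho x (rho y m) = rho y (rho x m) + rho (br x y) m.
Proof.
move=> /g0_even x0 y1; rewrite (@rho_br false true) //.
by rewrite /ssign /= scale1r addrC subrK.
Qed.

Lemma rho_anticomm x y m : pe x = 0 -> pe y = 0 ->
  rho x (rho y m) = - rho y (rho x m) + rho (br x y) m.
Proof.
move=> x1 y1; rewrite (@rho_br true true) //.
by rewrite /ssign /= scaleN1r opprK addrC addrK.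
Qed.

Lemma rho_sq0 x m : pe x = 0 -> br x x = 0 -> rho x (rho x m) = 0.
Proof.
move=> x1 xx0; have := rho_anticomm m x1 x1; rewrite xx0 (lin0 (rho_linearl m)) addr0.
move=> /eqP; rewrite -subr_eq0 opprK -mulr2n -scaler_nat scaler_eq0.
by rewrite (negbTE two_neq0) => /eqP.
Qed.

Lemma qM_rho_homog a x m : homog pe a x ->
  qM (rho x m) = rho x (if a then m - qM m else qM m).
Proof.
move=> xa.
have m_even : homog qM false (qM m) by rewrite /homog qM_idem.
have m_odd : homog qM true (m - qM m) by rewrite /homog (linB qM_linear) qM_idem subrr.
have -> : rho x m = rho x (m - qM m) + rho x (qM m).
  by rewrite -(linD (rho_linear x)) subrK.
have := rho_homog xa m_even; have := rho_homog xa m_odd.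
by rewrite (linD qM_linear); case: a xa => _ /= -> ->; rewrite ?addr0 ?add0r.
Qed.

Lemma qM_rho x m : qM (rho x m) = rho (pe x) (qM m) + rho (x - pe x) (m - qM m).
Proof.
rewrite -{1}(subrK (pe x) x) (linD (rho_linearl m)) (linD qM_linear) addrC.
by rewrite (qM_rho_homog _ (homog_even_part x)) (qM_rho_homog _ (homog_odd_part x)).
Qed.

Lemma rho_qM x m :
  rho x (qM m) = qM (rho (pe x) m) + (rho (x - pe x) m - qM (rho (x - pe x) m)).
Proof.
rewrite (qM_rho_homog _ (homog_even_part x)) (qM_rho_homog _ (homog_odd_part x)).
by rewrite (linB (rho_linear _)) subKr -(linD (rho_linearl _)) subrKC.
Qed.

Definition stable (P : set V) (S : set M) := forall x m, P x -> S m -> S (rho x m).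

Lemma graded_part_sub_supermodule Y : subspace Y -> stable setT Y ->
  sub_supermodule qM rho (fun _ => True) [set m | Y m /\ Y (qM m)].
Proof.
move=> HY Ystab; split.
- by rewrite /= (lin0 qM_linear); case: HY.
- move=> c u v [Yu Yqu] [Yv Yqv]; rewrite /= qM_linear.
  by case: HY => _ Ylin; split; apply: Ylin.
- by move=> m [Ym Yqm]; rewrite /= qM_idem.
- move=> x m _ [Ym Yqm]; split; first exact: Ystab.
  rewrite /= qM_rho; apply: subspaceD => //; apply: Ystab => //.
  exact: subspaceB.
Qed.

Lemma stable_full Y m0 b : subspace Y -> stable setT Y ->
  m0 != 0 -> homog qM b m0 -> Y m0 -> forall m, Y m.
Proof.
move=> HY Ystab m0_neq0 m0_homog Ym0.
have [Y0 | Yall m] := M_simple (graded_part_sub_supermodule HY Ystab); last first.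
  by case: (Yall m).
suff m00 : m0 = 0 by rewrite m00 eqxx in m0_neq0.
apply: Y0; split=> //; case: b m0_homog => ->; by [case: HY |].
Qed.

Definition word (w : seq V) (m : M) : M := foldr rho m w.

Lemma word_linear w : linear (word w).
Proof. by elim: w => [|x w IH] c u v //=; rewrite IH rho_linear. Qed.

Lemma word_rcons w x m : word (rcons w x) m = word w (rho x m).
Proof. exact: foldr_rcons. Qed.

Lemma word_cat a b m : word (a ++ b) m = word a (word b m).
Proof. exact: foldr_cat. Qed.

Definition core (S : set M) : set M := [set m | forall w, S (word w m)].

Lemma core_sub_supermodule S : subspace S -> (forall m, S m -> S (qM m)) ->
  sub_supermodule qM rho (fun _ => True) (core S).
Proof.
move=> HS Sq.
have core_qM m : core S m -> core S (qM m).
  move=> Sm w; elim/last_ind: w m Sm => [|w x IH] m Sm; first exact: Sq (Sm [::]).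
  have Sxm y : core S (rho y m) by move=> w'; rewrite -word_rcons; apply: Sm.
  rewrite word_rcons rho_qM (linD (word_linear w)) (linB (word_linear w)).
  apply: subspaceD => //; first exact/IH/Sxm.
  by apply: subspaceB => //; [apply: Sxm | apply/IH/Sxm].
split=> //.
- by move=> w; rewrite (lin0 (word_linear w)); case: HS.
- by move=> c u v Su Sv w; rewrite word_linear; case: HS => _; apply.
- by move=> x m _ Sm w; rewrite -word_rcons.
Qed.

Definition gen (P : set V) (G : set M) : set M :=
  fun m => forall S, subspace S -> G `<=` S -> stable P S -> S m.

Lemma gen_subspace P G : subspace (gen P G).
Proof.
split=> [S [S0 _] //|c u v Gu Gv S HS GS PS].
by case: (HS) => _; apply; [apply: Gu | apply: Gv].
Qed.

Lemma sub_gen P G : G `<=` gen P G.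
Proof. by move=> m Gm S _ GS _; apply: GS. Qed.

Lemma gen_stable P G : stable P (gen P G).
Proof. by move=> x m Px Gm S HS GS PS; apply: PS Px (Gm S HS GS PS). Qed.

Lemma gen_min P G S : subspace S -> G `<=` S -> stable P S -> gen P G `<=` S.
Proof. by move=> HS GS PS m; apply. Qed.

Definition rho_e (P : V -> V) (i : 'I_n) : M -> M := rho (P (e i)).

Lemma rho_odd_expand (P : V -> V) z m : linear P -> P z = z -> pe z = 0 ->
  exists c : 'I_n -> F, rho z m = \sum_(i < n) c i *: rho_e P i m.
Proof.
move=> P_lin Pz z_odd; have [c zE] := e_span_odd z_odd.
by exists c; rewrite -Pz zE (lin_sum P_lin) (lin_sum (rho_linearl m)).
Qed.

Lemma rho_e_anticomm (P : V -> V) :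
  (forall x, pe (P x) = 0) -> (forall x y, br (P x) (P y) = 0) ->
  forall i j m, rho_e P i (rho_e P j m) = - rho_e P j (rho_e P i m).
Proof.
move=> P_odd P_br i j m.
by rewrite /rho_e rho_anticomm // P_br (lin0 (rho_linearl _)) addr0.
Qed.

Lemma rho_e_sq0 (P : V -> V) :
  (forall x, pe (P x) = 0) -> (forall x y, br (P x) (P y) = 0) ->
  forall i m, rho_e P i (rho_e P i m) = 0.
Proof. by move=> P_odd P_br i m; apply: rho_sq0. Qed.

Lemma pe_Pm x : pe (Pm x) = 0. Proof. exact/gm_odd/gm_Pm. Qed.
Lemma pe_Pp x : pe (Pp x) = 0. Proof. exact/gp_odd/gp_Pp. Qed.
Lemma br_Pm x y : br (Pm x) (Pm y) = 0. Proof. exact: br_gm (gm_Pm x) (gm_Pm y). Qed.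
Lemma br_Pp x y : br (Pp x) (Pp y) = 0. Proof. exact: br_gp (gp_Pp x) (gp_Pp y). Qed.

Section FiniteGeneration.
Variables (m0 : M) (b0 : bool).
Hypotheses (m0_neq0 : m0 != 0) (m0_homog : homog qM b0 m0).

Definition wedges := wedge_orbit (rho_e Pm) (enum 'I_n) m0.

Lemma lspan_wedges_stable : stable gm (lspan [set` wedges]).
Proof.
move=> y m y_gm Wm; have [c ->] := rho_odd_expand m Pm_linear y_gm (gm_odd y_gm).
apply: subspace_sum (lspan_subspace _) _ => i.
apply: wedge_orbit_stable => //; rewrite ?mem_enum //.
- by move=> j; apply: rho_linear.
- exact: rho_e_anticomm pe_Pm br_Pm.
- exact: rho_e_sq0 pe_Pm br_Pm.
Qed.

Let U := gen g0 (lspan [set` wedges]).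

Lemma gen_g0_stable_gm : stable gm U.
Proof.
pose S := [set m | U m /\ forall y, gm y -> U (rho y m)].
suff US : U `<=` S by move=> y m y_gm /US[_]; apply.
have HU : subspace U := gen_subspace _ _.
apply: gen_min.
- split; first by split; [case: HU | move=> y _; rewrite (lin0 (rho_linear y)); case: HU].
  move=> c u v [Uu Uyu] [Uv Uyv]; split; first by case: HU => _; apply.
  by move=> y y_gm; rewrite rho_linear; case: HU => _; apply; [apply: Uyu | apply: Uyv].
- move=> m Wm; split; first exact: sub_gen.
  by move=> y y_gm; apply: sub_gen; apply: lspan_wedges_stable.
- move=> x m x_g0 [Um Uym]; split; first exact: gen_stable.
  move=> y y_gm; rewrite -[rho y _](addrK (rho (br x y) m)) -rho_comm_g0 ?(gm_odd y_gm) //.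
  apply: (subspaceB HU); last exact: Uym (br_g0_gm x_g0 y_gm).
  by apply: gen_stable => //; apply: Uym.
Qed.

Let X := gen gp U.

Lemma gen_gp_stable : stable setT X.
Proof.
pose S := [set m | [/\ X m, forall x, g0 x -> X (rho x m) & forall y, gm y -> X (rho y m)]].
have HX : subspace X := gen_subspace _ _.
have X_rho0 x : X (rho x 0) by rewrite (lin0 (rho_linear x)); case: HX.
have XS : X `<=` S.
  apply: gen_min.
  - split=> [|c u v [Xu Xxu Xyu] [Xv Xxv Xyv]]; first by split=> //; case: HX.
    split; [by case: HX => _; apply | |].
      by move=> x x0; rewrite rho_linear; case: HX => _; apply; [apply: Xxu | apply: Xxv].
    by move=> y y1; rewrite rho_linear; case: HX => _; apply; [apply: Xyu | apply: Xyv].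
  - move=> m Um; split; first exact: sub_gen.
      by move=> x x_g0; apply: sub_gen; apply: gen_stable.
    by move=> y y_gm; apply: sub_gen; apply: gen_g0_stable_gm.
  - move=> z m z_gp [Xm Xxm Xym]; split; first exact: gen_stable.
      move=> x x_g0; rewrite rho_comm_g0 ?(gp_odd z_gp) //.
      apply: (subspaceD HX); first by apply: gen_stable => //; apply: Xxm.
      by apply: gen_stable => //; apply: br_g0_gp.
    move=> y y_gm; rewrite rho_anticomm ?(gp_odd z_gp) ?(gm_odd y_gm) //.
    apply: (subspaceD HX); last exact: Xxm (br_gm_gp y_gm z_gp).
    by apply: (subspaceN HX); apply: gen_stable => //; apply: Xym.
move=> x m _ /XS[Xm Xxm Xym]; rewrite -(Psum x) !(linD (rho_linearl m)).
apply: (subspaceD HX); last by apply: gen_stable => //; apply: gp_Pp.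
by apply: (subspaceD HX); [apply: Xym; apply: gm_Pm | apply: Xxm; apply: g0_P0].
Qed.

Lemma g0_stable_absorbing_full S : subspace S -> stable g0 S ->
  (forall z m, gp z -> S (rho z m)) -> [set` wedges] `<=` S -> forall m, S m.
Proof.
move=> HS S_g0 S_gp WS m.
have XS : X `<=` S.
  apply: gen_min => // [m' Um' | z m' z_gp _]; last exact: S_gp.
  exact: gen_min (lspan_min HS WS) S_g0 _ Um'.
apply: XS; apply: (stable_full (gen_subspace _ _) gen_gp_stable m0_neq0 m0_homog).
by do 2!apply: sub_gen; apply: sub_lspan; apply: mem_wedge_orbit.
Qed.

End FiniteGeneration.

Definition admissible (S : set M) :=
  sub_supermodule qM rho g0 S /\ forall z m, gp z -> S (rho z m).

Lemma admissible_subspace S : admissible S -> subspace S.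
Proof. by case=> -[]. Qed.

Definition g1M : set M := lspan [set rho z m | z in gp & m in [set: M]].

Lemma g1M_admissible : admissible g1M.
Proof.
have HG : subspace g1M := lspan_subspace _.
have gen_g1M z m : gp z -> g1M (rho z m).
  by move=> z_gp; apply: sub_lspan; exists z => //; exists m.
split=> //; split; try by case: HG.
- apply: lspan_linear qM_linear _ => _ [z z_gp [m _ <-]].
  by rewrite (qM_rho_homog (a := true) m (gp_odd z_gp)); exact (gen_g1M z _ z_gp).
- move=> x w x_g0; move: w; apply: lspan_linear (rho_linear x) _ => _ [z z_gp [m' _ <-]].
  rewrite rho_comm_g0 ?(gp_odd z_gp) //.
  apply: (subspaceD HG); first exact (gen_g1M z _ z_gp).
  exact (gen_g1M _ _ (br_g0_gp x_g0 z_gp)).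
Qed.

Lemma g1M_proper : exists m, ~ g1M m.
Proof.
apply/existsNP => g1M_full; have [m /eqP] := M_nontrivial; apply.
apply: (@anticomm_lspan_eq0 _ _ _ (rho_e Pp) _ _ _ (enum 'I_n) setT) => //.
- by move=> i; apply: rho_linear.
- exact: rho_e_anticomm pe_Pp br_Pp.
- exact: rho_e_sq0 pe_Pp br_Pp.
move=> v _; apply: lspan_min (g1M_full v); first exact: lspan_subspace.
move=> _ [z z_gp [m' _ <-]].
have [c ->] := rho_odd_expand m' Pp_linear z_gp (gp_odd z_gp).
apply: subspace_sum (lspan_subspace _) _ => i.
by apply: sub_lspan; exists i; rewrite ?mem_enum //; exists m'.
Qed.

Lemma admissible_bigcup_chain (C : set (set M)) :
  C `<=` admissible -> C !=set0 -> total_on C subset ->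
  admissible (\bigcup_(X in C) X).
Proof.
move=> C_adm [X0 CX0] Ctot.
have [[X0_0 _ _ _] X0_gp] := C_adm X0 CX0.
split; last by move=> z m z_gp; exists X0 => //; apply: X0_gp.
split; first by exists X0.
- move=> c u v Uu Uv.
  have [|X CX uvX] := bigcup_chain_seq (L := [:: u; v]) (ex_intro _ X0 CX0) Ctot.
    by move=> w; rewrite /= !inE => /orP[/eqP-> | /eqP->].
  have [[_ Xlin _ _] _] := C_adm X CX.
  by exists X => //; apply: Xlin; apply: uvX; rewrite /= !inE eqxx ?orbT.
- move=> m [X CX Xm]; have [[_ _ Xq _] _] := C_adm X CX.
  by exists X => //; apply: Xq.
- move=> x m x_g0 [X CX Xm]; have [[_ _ _ Xrho] _] := C_adm X CX.
  by exists X => //; apply: Xrho.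
Qed.

Lemma exists_homog_nonzero : exists m b, m != 0 /\ homog qM b m.
Proof.
have [m m_neq0] := M_nontrivial.
have [qm0 | qm_neq0] := eqVneq (qM m) 0; first by exists m, true.
by exists (qM m), false; rewrite /homog qM_idem.
Qed.

Lemma exists_maximal_admissible : exists K, [/\ admissible K, exists m, ~ K m &
  forall S, admissible S -> K `<=` S -> (exists m, ~ S m) -> S `<=` K].
Proof.
have [m0 [b0 [m0_neq0 m0_homog]]] := exists_homog_nonzero.
pose P S := admissible S /\ ~ [set` wedges m0] `<=` S.
have proper_P S : admissible S -> (exists m, ~ S m) -> P S.
  move=> S_adm [m Sm]; split=> // WS; apply: Sm.
  have [[_ _ _ S_g0] S_gp] := S_adm.
  exact: (g0_stable_absorbing_full m0_neq0 m0_homog (admissible_subspace S_adm)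
    S_g0 S_gp WS).
have [|C CP C0 Ctot|K _ [[K_adm K_W] K_max]] := Zorn_bigcup_above (S0 := g1M) (P := P).
- exact: proper_P g1M_admissible g1M_proper.
- split; first by apply: admissible_bigcup_chain => // X /CP[].
  move=> WC; have [X /CP[_ XW] WX] := bigcup_chain_seq C0 Ctot WC.
  exact: XW WX.
exists K; split=> //.
  by apply/existsNP => Kfull; apply: K_W => m _; apply: Kfull.
by move=> S S_adm KS S_proper; rewrite (K_max S (proper_P S S_adm S_proper) KS).
Qed.

Section SimpleQuotient.
Variable K : set M.
Hypotheses (K_adm : admissible K) (K_proper : exists m, ~ K m).
Hypothesis K_max :
  forall S, admissible S -> K `<=` S -> (exists m, ~ S m) -> S `<=` K.

Let K_sub := admissible_subspace K_adm.
Local Notation N := (Quotient.quot (subspace_pred K_sub)).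
Local Notation piN := (@qproj _ _ _ K_sub).
Let piN_linear : linear piN := @qproj_linear _ _ _ K_sub.
Let piN_eq0 m : piN m = 0 <-> K m := @qproj_eq0 _ _ _ K_sub m.
Let piN_eqP m m' : piN m = piN m' <-> K (m - m') := @qproj_eqP _ _ _ K_sub m m'.

Lemma K_qM m : K m -> K (qM m). Proof. by case: K_adm => -[_ _ Kq _] _; apply: Kq. Qed.
Lemma K_g0 x m : g0 x -> K m -> K (rho x m).
Proof. by case: K_adm => -[_ _ _ Krho] _; apply: Krho. Qed.
Lemma K_gp z m : gp z -> K (rho z m). Proof. by case: K_adm => _ Kgp; apply: Kgp. Qed.

Definition qN (q : N) : N := piN (qM (repr q)).
(* Only g_0 acts on N; going through P0 makes rhoN total without changing it on g_0. *)
Definition rhoN (x : V) (q : N) : N := piN (rho (P0 x) (repr q)).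

Lemma qN_pi m : qN (piN m) = piN (qM m).
Proof. by apply: qproj_repr_map qM_linear _ => _ [m' Km' <-]; apply: K_qM. Qed.

Lemma rhoN_pi x m : rhoN x (piN m) = piN (rho (P0 x) m).
Proof.
by apply: qproj_repr_map (rho_linear _) _ => _ [m' Km' <-]; apply: K_g0 (g0_P0 x) Km'.
Qed.

Lemma homog_pi b m : homog qM b m -> homog qN b (piN m).
Proof. by rewrite /homog qN_pi; case: b => -> //; exact: (lin0 piN_linear). Qed.

Lemma homog_lift b q : homog qN b q -> exists2 m, q = piN m & homog qM b m.
Proof.
elim/qproj_ind: q => m; rewrite /homog qN_pi; case: b => qm.
  exists (m - qM m); last by rewrite (linB qM_linear) qM_idem subrr.
  by rewrite (linB piN_linear) qm subr0.
by exists (qM m); rewrite ?qM_idem.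
Qed.

Lemma N_supermodule : supermodule pe br g0 qN rhoN.
Proof.
split.
- split=> [c|]; last by elim/qproj_ind => m; rewrite !qN_pi qM_idem.
  elim/qproj_ind => u; elim/qproj_ind => v.
  by rewrite -piN_linear !qN_pi qM_linear piN_linear.
- move=> x _ c; elim/qproj_ind => u; elim/qproj_ind => v.
  by rewrite -piN_linear !rhoN_pi rho_linear piN_linear.
- move=> c x y q _ _; elim/qproj_ind: q => m.
  by rewrite !rhoN_pi P0_linear rho_linearl piN_linear.
- move=> a b x q x_g0 xa /homog_lift[m -> mb].
  by rewrite rhoN_pi x_g0; apply/homog_pi/rho_homog.
- move=> a b x y q x_g0 y_g0 xa yb; elim/qproj_ind: q => m.
  rewrite !rhoN_pi (br_g0_g0 x_g0 y_g0) x_g0 y_g0 (rho_br _ xa yb).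
  by rewrite (linB piN_linear) (linZ piN_linear).
Qed.

Lemma N_simple : simple_supermodule pe br g0 qN rhoN.
Proof.
split; first exact: N_supermodule.
  have [m Km] := K_proper; exists (piN m); apply: contra_notN Km => /eqP.
  by move/piN_eq0.
move=> T [T0 Tlin Tq Trho].
pose S := [set m | T (piN m)].
have KS : K `<=` S by move=> m Km; rewrite /S /= (piN_eq0 m).2.
have S_adm : admissible S.
  split; last by move=> z m z_gp; apply/KS/K_gp.
  split; rewrite /S /=.
  - by rewrite (lin0 piN_linear).
  - by move=> c u v Tu Tv; rewrite piN_linear; apply: Tlin.
  - by move=> m Tm; rewrite -qN_pi; apply: Tq.
  - by move=> x m x_g0 Tm; rewrite -{1}x_g0 -rhoN_pi; apply: Trho.
have [S_proper | S_full] := pselect (exists m, ~ S m); last first.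
  by right; elim/qproj_ind => m; apply: contrapT => Tm; apply: S_full; exists m.
by left; elim/qproj_ind => m Tm; apply/piN_eq0; apply: K_max S_adm KS S_proper _ Tm.
Qed.

Definition phi (m : M) (w : seq V) : N := piN (word w m).

Lemma phi_in_Coind m : in_Coind pe br P0 Pp rhoN (phi m).
Proof.
split.
- by move=> a b c x y; rewrite /phi !word_cat /= rho_linearl (word_linear a) piN_linear.
- move=> a b p q x y xp yq; rewrite /phi !word_cat /=.
  rewrite -[rho x _](subrK (ssign F p q *: rho y (rho x (word b m)))) -rho_br //.
  by rewrite addrC (word_linear a) piN_linear.
- by move=> x w x_g0; rewrite /phi /= rhoN_pi x_g0.
- by move=> x w x_gp; apply/piN_eq0/K_gp.
Qed.

Lemma phi_injective m m' : (forall w, phi m w = phi m' w) -> m = m'.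
Proof.
move=> phimm'; apply/eqP; rewrite -subr_eq0; apply/eqP.
have core_sub := core_sub_supermodule K_sub K_qM.
have [core0 | core_full] := M_simple core_sub; last first.
  by have [m0 Km0] := K_proper; case: Km0; apply: (core_full m0 [::]).
apply: core0 => w; rewrite (linB (word_linear w)); apply/piN_eqP; exact: phimm'.
Qed.

Lemma word_homog a m w : homog qM a m -> (forall l, l \in w -> homog pe l.1 l.2) ->
  homog qM (foldl addb a (map fst w)) (word (map snd w) m).
Proof.
elim: w => [|l w IH] //= ma w_homog.
rewrite foldl_addb addbC; apply: rho_homog; first by apply: w_homog; rewrite mem_head.
by apply: IH => // l' wl'; apply: w_homog; rewrite inE wl' orbT.
Qed.

Lemma N_embedding : embeds_into_Coind pe br P0 Pp qM rho qN rhoN.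
Proof.
exists phi; split.
- by move=> c m m' w; rewrite /phi (word_linear w) piN_linear.
- exact: phi_in_Coind.
- exact: phi_injective.
- by move=> x m w; rewrite /coind_act /phi word_rcons.
- by move=> a m w ma w_homog; apply/homog_pi/word_homog.
Qed.

End SimpleQuotient.

Lemma exists_simple_coinduced_embedding :
  exists (N : lmodType F) (qN : N -> N) (rhoN : V -> N -> N),
    simple_supermodule pe br (fun x => P0 x = x) qN rhoN /\
    embeds_into_Coind pe br P0 Pp qM rho qN rhoN.
Proof.
have [K [K_adm K_proper K_max]] := exists_maximal_admissible.
exists (Quotient.quot (subspace_pred (admissible_subspace K_adm))).
exists (qN (K_adm := K_adm)), (rhoN (K_adm := K_adm)).
by split; [apply: N_simple | apply: N_embedding].
Qed.

End CoinducedEmbedding.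

Theorem lemma4p2 (R : realType) (V : lmodType (Cplx R)) (pe : V -> V)
    (br : V -> V -> V) (Pm P0 Pp : V -> V)
    (Hlie : lie_superalgebra pe br)
    (Hgr : compatible_grading pe br Pm P0 Pp)
    (Hfin : odd_part_findim pe)
    (M : lmodType (Cplx R)) (qM : M -> M) (rhoM : V -> M -> M)
    (HM : simple_supermodule pe br (fun _ => True) qM rhoM) :
  exists (N : lmodType (Cplx R)) (qN : N -> N) (rhoN : V -> N -> N),
    simple_supermodule pe br (fun x => P0 x = x) qN rhoN /\
    embeds_into_Coind pe br P0 Pp qM rhoM qN rhoN.
Proof.
have [n [e e_span_odd]] := Hfin.
have two_neq0 : (2%:R : R[i]) != 0 by rewrite Num.Theory.pnatr_eq0.
exact: (exists_simple_coinduced_embedding Hlie Hgr e_span_odd HM two_neq0).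
Qed.
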